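(* Let $\mathcal H$ be a separable complex Hilbert space, $A_1,A_2\in L(\mathcal H)^+$, $B\in L(\mathcal H)$ with closed range. If $G\in L(\mathcal H)$ is an $A_1A_2$-inverse of $B$, then (1) $A_1BGB=A_1B$ and $A_1BG=(BG)^*A_1$; (2) $A_2GBG=A_2G$ and $A_2GB=(GB)^*A_2$.
   Context: $\|z\|_{A}=\langle Az,z\rangle^{1/2}$ for $A\in L(\mathcal H)^+$. For $y\in\mathcal H$, $x_0$ is an $A_1$-least squares solution ($A_1$-LSS) of $Bx=y$ if $\|y-Bx_0\|_{A_1}\le\|y-Bx\|_{A_1}$ for all $x\in\mathcal H$. $G$ is an $A_1$-inverse of $B$ if $Gy$ is an $A_1$-LSS of $Bx=y$ for every $y$. $G$ is an $A_1A_2$-inverse of $B$ if $G$ is an $A_1$-inverse of $B$ and, for each $y\in\mathcal H$, $\|Gy\|_{A_2}\le\|x_0\|_{A_2}$ for every $A_1$-LSS $x_0$ of $Bx=y$. *)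

From HB Require Import structures.
From mathcomp Require Import all_boot all_order all_algebra.
From mathcomp Require Import reals complex.
Set Implicit Arguments. Unset Strict Implicit. Unset Printing Implicit Defensive.
Import Order.TTheory GRing.Theory Num.Theory.
Local Open Scope ring_scope.
Local Open Scope complex_scope.

Section Hilbert.
Variable R : realType.
Variables (H : lmodType R[i]) (ip : H -> H -> R[i]).

Definition ipnorm (x : H) : R := Num.sqrt (complex.Re (ip x x)).

Definition cvg_to (u : nat -> H) (y : H) : Prop :=
  forall e : R, 0 < e -> exists N : nat, forall n, (N <= n)%N -> ipnorm (u n - y) < e.

Definition cauchy (u : nat -> H) : Prop :=
  forall e : R, 0 < e -> exists N : nat, forall n m, (N <= n)%N -> (N <= m)%N ->
    ipnorm (u n - u m) < e.

Definition separable_hilbert : Prop :=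
  [/\ ((forall (a : R[i]) (x y z : H), ip (a *: x + y) z = a * ip x z + ip y z) /\
      (forall x y : H, ip x y = (ip y x)^*)),
      (forall x : H, 0 <= ip x x),
      (forall x : H, ip x x = 0 -> x = 0),
      (forall u : nat -> H, cauchy u -> exists y, cvg_to u y) &
      (exists d : nat -> H, forall (x : H) (e : R), 0 < e ->
          exists n, ipnorm (x - d n) < e)].

Definition bounded_op (T : H -> H) : Prop :=
  (forall (a : R[i]) (x y : H), T (a *: x + y) = a *: T x + T y) /\
  (exists M : R, forall x, ipnorm (T x) <= M * ipnorm x).

Definition positive_op (A : H -> H) : Prop :=
  bounded_op A /\ forall x, 0 <= ip (A x) x.

Definition closed_range (T : H -> H) : Prop :=
  forall (u : nat -> H) (y : H), cvg_to (fun n => T (u n)) y -> exists x, T x = y.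

Definition is_adjoint (T S : H -> H) : Prop :=
  forall x y, ip (T x) y = ip x (S y).

Definition Anorm (A : H -> H) (z : H) : R := Num.sqrt (complex.Re (ip (A z) z)).

Definition is_LSS (A1 B : H -> H) (y x0 : H) : Prop :=
  forall x, Anorm A1 (y - B x0) <= Anorm A1 (y - B x).

Definition A_inverse (A1 B G : H -> H) : Prop :=
  forall y, is_LSS A1 B y (G y).

Definition AA_inverse (A1 A2 B G : H -> H) : Prop :=
  A_inverse A1 B G /\
  forall y x0, is_LSS A1 B y x0 -> Anorm A2 (G y) <= Anorm A2 x0.

End Hilbert.

(* An A1-least squares solution x0 of B x = y is characterised by the normal
   equation <A1 (y - B x0), B u> = 0 for all u: minimising the positive Hermitian
   form z |-> <A1 z, z> along the line y - B x0 + a B u forces its linear term to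
   vanish.  For y = B x, x0 = G B x and u = x - G B x it reads <A1 r, r> = 0 with
   r = B x - B G B x, so A1 r = 0; using it on both sides of <z, A1 B G x> turns
   this into <B G z, A1 x>.
   The A1-least squares solutions also contain G y + ker (A1 B), so the minimality
   of the A2-seminorm at G y gives <A2 G y, z> = 0 for every z in ker (A1 B); since
   w - G B w lies in ker (A1 B) by (1), this yields (2) in the same way. *)

From HB Require Import structures.
From mathcomp Require Import all_boot all_order all_algebra.
From mathcomp Require Import reals complex ring lra.
Import Order.TTheory GRing.Theory Num.Theory.
Local Open Scope ring_scope.
Local Open Scope complex_scope.

Lemma ge0_conjc {R : realType} {z : R[i]} : 0 <= z -> z^* = z.
Proof. by move=> /ger0_real /conj_Creal. Qed.

Section LinearFun.
Context {K : pzRingType} {U V : lmodType K} {T : U -> V}.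
Hypothesis T_linear : forall a x y, T (a *: x + y) = a *: T x + T y.

Lemma linear_fun0 : T 0 = 0.
Proof.
by apply: (addrI (T 0)); rewrite addr0 -{1}(scale1r (T 0)) -T_linear scaler0 addr0.
Qed.

Lemma linear_funD x y : T (x + y) = T x + T y.
Proof. by rewrite -{1}[x]scale1r T_linear scale1r. Qed.

Lemma linear_funZ a x : T (a *: x) = a *: T x.
Proof. by rewrite -[a *: x]addr0 T_linear linear_fun0 addr0. Qed.

Lemma linear_funB x y : T (x - y) = T x - T y.
Proof. by rewrite -scaleN1r linear_funD linear_funZ scaleN1r. Qed.

End LinearFun.

Section PositiveForm.
Context {R : realType} {H : lmodType R[i]} {F : H -> H -> R[i]}.
Hypothesis F_linear_l : forall a x y z, F (a *: x + y) z = a * F x z + F y z.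
Hypothesis F_semilinear_r : forall a x y z, F z (a *: x + y) = a^* * F z x + F z y.
Hypothesis F_ge0 : forall x, 0 <= F x x.

(* Positivity makes F Hermitian: F is real on x + y and on 'i y + x. *)
Lemma form_conj x y : F y x = (F x y)^*.
Proof.
have real_xy := ge0_conjc (F_ge0 (1 *: x + y)).
have real_iyx := ge0_conjc (F_ge0 ('i *: y + x)).
rewrite F_linear_l !F_semilinear_r in real_xy.
rewrite F_linear_l !F_semilinear_r in real_iyx.
move: real_xy real_iyx (ger0_Im (F_ge0 x)) (ger0_Im (F_ge0 y)).
case: (F x y) => s1 s2; case: (F y x) => t1 t2.
case: (F x x) => p1 p2; case: (F y y) => q1 q2.
by simpc => -[e1] [e2] /= xx_im yy_im; congr Complex; lra.
Qed.

Lemma form_expand r v a : F (r + a *: v) (r + a *: v) =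
  F r r + a^* * F r v + a * (F r v)^* + a * a^* * F v v.
Proof.
by rewrite addrC F_linear_l !F_semilinear_r (form_conj r v); ring.
Qed.

Lemma form_eq0_of_min r v :
  (forall a, complex.Re (F r r) <= complex.Re (F (r + a *: v) (r + a *: v))) -> F r v = 0.
Proof.
move=> r_min; have := F_ge0 v; rewrite lecE => /andP [/eqP vv_im vv_ge0].
(* Along a := - t F(r, v) with t := 1 / (F(v, v) + 1), the form drops by
   t |F(r, v)|^2 (2 - t F(v, v)), and 2 - t F(v, v) > 1. *)
pose t := (complex.Re (F v v) + 1)^-1.
have t_gt0 : 0 < t by rewrite invr_gt0; lra.
have t_inv : t * (complex.Re (F v v) + 1) = 1 by rewrite mulVf //; lra.
have := r_min (- (t%:C * F r v)); rewrite form_expand.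
move: t_gt0 t_inv vv_im vv_ge0; rewrite -/t.
case: (F r v) => w1 w2; case: (F v v) => d1 d2; case: (F r r) => p1 p2 /=.
move=> t_gt0 t_inv -> d1_ge0; simpc => /= drop_ge0.
have td1 : t * d1 = 1 - t by lra.
have w_le0 : (w1 ^+ 2 + w2 ^+ 2) * (t * (1 + t)) <= 0.
  have : 0 <= t * (w1 ^+ 2 + w2 ^+ 2) * (t * d1 - 2) by lra.
  by rewrite td1; lra.
rewrite pmulr_lle0 ?mulr_gt0 // in w_le0; last by lra.
have /eqP : w1 ^+ 2 + w2 ^+ 2 = 0 by apply/eqP; rewrite eq_le w_le0 addr_ge0 ?sqr_ge0.
by rewrite paddr_eq0 ?sqr_ge0 // !sqrf_eq0 => /andP [/eqP -> /eqP ->].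
Qed.
End PositiveForm.

Section InnerProduct.
Context {R : realType} {H : lmodType R[i]} {ip : H -> H -> R[i]}.
Hypothesis ip_linear_l : forall a x y z, ip (a *: x + y) z = a * ip x z + ip y z.
Hypothesis ip_conj : forall x y, ip x y = (ip y x)^*.
Hypothesis ip_eq0 : forall x, ip x x = 0 -> x = 0.

Lemma ip_semilinear_r a x y z : ip z (a *: x + y) = a^* * ip z x + ip z y.
Proof. by rewrite ip_conj ip_linear_l (ip_conj z x) (ip_conj z y) rmorphD rmorphM. Qed.

Lemma ipBl x y z : ip (x - y) z = ip x z - ip y z.
Proof. by rewrite addrC -scaleN1r ip_linear_l mulN1r addrC. Qed.

Lemma ipBr x y z : ip z (x - y) = ip z x - ip z y.
Proof. by rewrite addrC -scaleN1r ip_semilinear_r rmorphN1 mulN1r addrC. Qed.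

Lemma ip_inj_r a b : (forall z, ip z a = ip z b) -> a = b.
Proof.
move=> eq_ab; apply/eqP; rewrite -subr_eq0; apply/eqP/ip_eq0.
by rewrite ipBr eq_ab subrr.
Qed.

Section PositiveOperator.
Context {A : H -> H}.
Hypothesis A_linear : forall a x y, A (a *: x + y) = a *: A x + A y.
Hypothesis A_ge0 : forall x, 0 <= ip (A x) x.

Let Aform x y := ip (A x) y.

Let Aform_linear_l a x y z : Aform (a *: x + y) z = a * Aform x z + Aform y z.
Proof. by rewrite /Aform A_linear ip_linear_l. Qed.

Let Aform_semilinear_r a x y z : Aform z (a *: x + y) = a^* * Aform z x + Aform z y.
Proof. exact: ip_semilinear_r. Qed.

Lemma posop_selfadj x y : ip (A x) y = ip x (A y).
Proof. by rewrite (ip_conj x); exact: (form_conj Aform_linear_l Aform_semilinear_r A_ge0). Qed.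

Lemma Anorm_min_orth r v :
  (forall a, Anorm ip A r <= Anorm ip A (r + a *: v)) -> ip (A r) v = 0.
Proof.
move=> r_min; apply: (form_eq0_of_min Aform_linear_l Aform_semilinear_r A_ge0) => a.
have Re_ge0 z : 0 <= complex.Re (ip (A z) z) by move: (A_ge0 z); rewrite lecE => /andP[].
by rewrite -ler_sqrt ?Re_ge0 //; apply: r_min.
Qed.

Lemma posop_eq0 x : ip (A x) x = 0 -> A x = 0.
Proof.
move=> Ax_x; apply: ip_eq0; apply: Anorm_min_orth => a.
by rewrite /Anorm Ax_x sqrtr0 sqrtr_ge0.
Qed.

End PositiveOperator.

Section LeastSquares.
Context {A1 B : H -> H}.
Hypothesis A1_linear : forall a x y, A1 (a *: x + y) = a *: A1 x + A1 y.
Hypothesis A1_ge0 : forall x, 0 <= ip (A1 x) x.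
Hypothesis B_linear : forall a x y, B (a *: x + y) = a *: B x + B y.

Lemma LSS_normal {y x0} : is_LSS ip A1 B y x0 -> forall u, ip (A1 (y - B x0)) (B u) = 0.
Proof.
move=> x0_LSS u; apply: Anorm_min_orth => // a.
have -> : y - B x0 + a *: B u = y - B (x0 - a *: u).
  by rewrite (linear_funB B_linear) (linear_funZ B_linear) opprB addrA addrAC.
exact: x0_LSS.
Qed.

Lemma LSS_shift y x0 z :
  is_LSS ip A1 B y x0 -> A1 (B z) = 0 -> is_LSS ip A1 B y (x0 + z).
Proof.
move=> x0_LSS A1Bz x.
suff -> : Anorm ip A1 (y - B (x0 + z)) = Anorm ip A1 (y - B x0) by exact: x0_LSS.
rewrite /Anorm (linear_funD B_linear) opprD addrA (linear_funB A1_linear) A1Bz subr0.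
by rewrite ipBr (LSS_normal x0_LSS) subr0.
Qed.

Section AInverse.
Context {G : H -> H}.
Hypothesis G_Ainv : A_inverse ip A1 B G.

Lemma Ainv_normal y u : ip (A1 y) (B u) = ip (A1 (B (G y))) (B u).
Proof.
apply/eqP; rewrite -subr_eq0 -ipBl -(linear_funB A1_linear).
by rewrite (LSS_normal (G_Ainv y)).
Qed.

Lemma Ainv_BGB x : A1 (B (G (B x))) = A1 (B x).
Proof.
apply/esym/eqP; rewrite -subr_eq0 -(linear_funB A1_linear); apply/eqP/posop_eq0 => //.
by have := LSS_normal (G_Ainv (B x)) (x - G (B x)); rewrite (linear_funB B_linear).
Qed.

Lemma Ainv_ker w : A1 (B (w - G (B w))) = 0.
Proof. by rewrite (linear_funB B_linear) (linear_funB A1_linear) Ainv_BGB subrr. Qed.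

Lemma Ainv_adjoint S :
  is_adjoint ip (fun x => B (G x)) S -> forall x, A1 (B (G x)) = S (A1 x).
Proof.
move=> S_adj x; apply: ip_inj_r => z; rewrite -(S_adj z (A1 x)) /=.
have BGz_normal : ip (B (G z)) (A1 x) = ip (A1 (B (G z))) (B (G x)).
  by rewrite ip_conj Ainv_normal (posop_selfadj A1_linear A1_ge0) -ip_conj.
by rewrite BGz_normal -(posop_selfadj A1_linear A1_ge0) Ainv_normal.
Qed.

End AInverse.

Section AAInverse.
Context {G A2 : H -> H}.
Hypothesis A2_linear : forall a x y, A2 (a *: x + y) = a *: A2 x + A2 y.
Hypothesis A2_ge0 : forall x, 0 <= ip (A2 x) x.
Hypothesis G_AAinv : AA_inverse ip A1 A2 B G.

Let A1B_ker := Ainv_ker G_AAinv.1.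

Lemma AAinv_orth y z : A1 (B z) = 0 -> ip (A2 (G y)) z = 0.
Proof.
move=> A1Bz; apply: Anorm_min_orth => // a; apply: G_AAinv.2.
apply: LSS_shift; first exact: G_AAinv.1.
by rewrite (linear_funZ B_linear) (linear_funZ A1_linear) A1Bz scaler0.
Qed.

Lemma AAinv_GBG x : A2 (G (B (G x))) = A2 (G x).
Proof.
apply/esym/eqP; rewrite -subr_eq0 -(linear_funB A2_linear); apply/eqP/posop_eq0 => //.
by rewrite (linear_funB A2_linear) ipBl !AAinv_orth ?A1B_ker ?subrr.
Qed.

Lemma AAinv_adjoint S :
  is_adjoint ip (fun x => G (B x)) S -> forall x, A2 (G (B x)) = S (A2 x).
Proof.
move=> S_adj x; apply: ip_inj_r => w; rewrite -(S_adj w (A2 x)) /=.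
have GBx_orth : ip (A2 (G (B w))) x = ip (A2 (G (B w))) (G (B x)).
  by apply/eqP; rewrite -subr_eq0 -ipBr AAinv_orth ?A1B_ker.
have GBw_orth : ip (A2 w) (G (B x)) = ip (A2 (G (B w))) (G (B x)).
  apply/eqP; rewrite -subr_eq0 -ipBl -(linear_funB A2_linear) (posop_selfadj A2_linear A2_ge0).
  by rewrite ip_conj AAinv_orth ?A1B_ker ?conjc0.
by rewrite -!(posop_selfadj A2_linear A2_ge0) GBw_orth GBx_orth.
Qed.

End AAInverse.
End LeastSquares.
End InnerProduct.

Theorem mainTheorem17 (R : realType) (H : lmodType R[i]) (ip : H -> H -> R[i])
  (hH : separable_hilbert ip)
  (A1 A2 B G : H -> H)
  (hA1 : positive_op ip A1) (hA2 : positive_op ip A2)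
  (hB : bounded_op ip B) (hBr : closed_range ip B)
  (hG : bounded_op ip G) (hAA : AA_inverse ip A1 A2 B G) :
  ((forall x, A1 (B (G (B x))) = A1 (B x)) /\
   (forall S, is_adjoint ip (fun x => B (G x)) S ->
      forall x, A1 (B (G x)) = S (A1 x))) /\
  ((forall x, A2 (G (B (G x))) = A2 (G x)) /\
   (forall S, is_adjoint ip (fun x => G (B x)) S ->
      forall x, A2 (G (B x)) = S (A2 x))).
Proof.
case: hH => [[ip_linear ip_conj] _ ip_eq0 _ _].
case: hA1 => [[A1_linear _] A1_ge0]; case: hA2 => [[A2_linear _] A2_ge0].
case: hB => [B_linear _]; have G_Ainv := hAA.1.
split; split.
- exact: (Ainv_BGB ip_linear ip_conj ip_eq0 A1_linear A1_ge0 B_linear G_Ainv).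
- exact: (Ainv_adjoint ip_linear ip_conj ip_eq0 A1_linear A1_ge0 B_linear G_Ainv).
- exact: (AAinv_GBG ip_linear ip_conj ip_eq0 A1_linear A1_ge0 B_linear A2_linear A2_ge0 hAA).
- exact: (AAinv_adjoint ip_linear ip_conj ip_eq0 A1_linear A1_ge0 B_linear A2_linear A2_ge0 hAA).
Qed.
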